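(* Let $a$ and $b$ be relatively prime integers with $1<a<b$ and $S=\langle a,b\rangle$. Let $x\in I(S)$. If $n$ is the smallest positive integer such that $x+na\in S$, then $x+na\in b\mathbb{N}$.
   Context: $\mathbb{N}$ is the set of nonnegative integers, $b\mathbb{N}=\{bk:k\in\mathbb{N}\}$, and $\langle a,b\rangle=\{\lambda_1a+\lambda_2b:\lambda_1,\lambda_2\in\mathbb{N}\}$. $I(S)$ is the set of isolated gaps of $S$, i.e. elements $x\in\mathbb{N}\setminus S$ with $x-1,x+1\in S$. *)

From mathcomp Require Import all_boot.

Definition in_sg2 (a b x : nat) : Prop := exists l1 l2 : nat, x = l1 * a + l2 * b.

Definition is_gap (a b x : nat) : Prop := ~ in_sg2 a b x.

(* Isolated gaps I(S): gaps x with x-1 and x+1 in S (x >= 1 so that x-1 is in N). *)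
Definition isolated_gap (a b x : nat) : Prop :=
  is_gap a b x /\ 0 < x /\ in_sg2 a b x.-1 /\ in_sg2 a b x.+1.

Definition in_multiples (b y : nat) : Prop := exists k : nat, y = b * k.

From mathcomp Require Import all_boot.

(* Writing [x + n a = l1 a + l2 b], a positive [l1] would put [x + (n - 1) a]
   in [S], contradicting the minimality of [n] (or, for [n = 1], that [x] is a
   gap); hence [l1 = 0]. *)

Lemma in_sg2_multiple_or_addr (a b y : nat) :
  in_sg2 a b y -> in_multiples b y \/ exists2 z, in_sg2 a b z & y = z + a.
Proof.
case=> [[|l1]] [l2 ->].
- by left; exists l2; rewrite mul0n add0n mulnC.
- right; exists (l1 * a + l2 * b); first by exists l1, l2.
  by rewrite mulSnr addnAC.
Qed.

Theorem lemma4p5 (a b x n : nat) :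
  coprime a b -> 1 < a -> a < b ->
  isolated_gap a b x ->
  0 < n -> in_sg2 a b (x + n * a) ->
  (forall m : nat, 0 < m -> m < n -> ~ in_sg2 a b (x + m * a)) ->
  in_multiples b (x + n * a).
Proof.
move=> _ _ _ [gap_x _] n_gt0 Sxn min_n.
case/in_sg2_multiple_or_addr: Sxn => [// | [z Sz]].
rewrite -(prednK n_gt0) mulSnr addnA => /addIn z_eq; rewrite -z_eq in Sz; exfalso.
case: (posnP n.-1) => [n1_eq0 | n1_gt0].
- by apply: gap_x; rewrite n1_eq0 mul0n addn0 in Sz.
- by apply: (min_n n.-1) => //; rewrite ltn_predL.
Qed.
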